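(* Let $x\in\{0,1\}^n$ and let $y\in\{0,1\}^n$ have Hamming distance $k$ to $x$, where $1\le k\le cn$. Apply static hypermutation with FCM to $x$. Let $E_y$ be the event that $y$ is evaluated during the hypermutation, and $E_c$ the event that the hypermutation stops earlier (before evaluating the $k$-th string of its sequence) on a constructive mutation. Then $\Pr\{E_y\vee E_c\}\ge \binom{n}{k}^{-1}$. Moreover, if there are no constructive mutations (i.e. no strings that would count as constructive) at Hamming distance smaller than $k$ from $x$, then $\Pr\{E_y\}=\binom{n}{k}^{-1}$.
   Context: Static hypermutation with FCM (stop at first constructive mutation), with constant parameter $0<c\le1$ and mutation potential $M=cn$ (an integer), applied to $x\in\{0,1\}^n$ for a fitness function $f$: distinct bit positions are chosen uniformly at random without replacement and flipped one after another, and after each flip the current string is evaluated; the process stops as soon as the current string is a constructive mutation (a string whose fitness is better than, or in one variant at least as good as, $f(x)$) or after $M$ bits have been flipped. The $i$-th evaluated string thus has Hamming distance $i$ to $x$. *)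

From mathcomp Require Import all_boot all_order all_algebra all_fingroup.
Set Implicit Arguments. Unset Strict Implicit. Unset Printing Implicit Defensive.
Import Order.TTheory GRing.Theory Num.Theory.

Definition bitstring (n : nat) := {ffun 'I_n -> bool}.

Definition hamming n (x y : bitstring n) : nat := #|[set j | x j != y j]|.

Definition constructive d (T : orderType d) n (f : bitstring n -> T)
  (strict : bool) (x z : bitstring n) : bool :=
  if strict then (f x < f z)%O else (f x <= f z)%O.

(* The random choice of distinct positions without replacement is modelled by a
   uniformly random permutation s of 'I_n : the t-th flipped position is s t. *)
Definition evalstr n (x : bitstring n) (s : {perm 'I_n}) (i : nat) : bitstring n :=
  [ffun j => x j (+) (j \in [set s t | t : 'I_n & (t < i)%N])].

(* E_y : y is evaluated, i.e. y is the i-th evaluated string for some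
   1 <= i <= M and the process did not stop before (no constructive among the
   first i-1 evaluated strings). *)
Definition E_y d (T : orderType d) n (f : bitstring n -> T) (strict : bool)
  (M : nat) (x y : bitstring n) (s : {perm 'I_n}) : bool :=
  [exists i : 'I_n.+1, [&& (1 <= i)%N, (i <= M)%N, evalstr x s i == y &
     [forall j : 'I_n.+1, ((1 <= j)%N && (j < i)%N) ==>
        ~~ constructive f strict x (evalstr x s j)]]].

Definition E_c d (T : orderType d) n (f : bitstring n -> T) (strict : bool)
  (M k : nat) (x : bitstring n) (s : {perm 'I_n}) : bool :=
  [exists i : 'I_n.+1, [&& (1 <= i)%N, (i < k)%N, (i <= M)%N &
     constructive f strict x (evalstr x s i)]].

Definition Pr n (P : pred {perm 'I_n}) : rat :=
  (#|[set s | P s]|%:R / #|{perm 'I_n}|%:R)%R.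

From mathcomp Require Import all_boot all_order all_algebra all_fingroup.
From mathcomp Require Import primitive_action alt.
Import Order.TTheory GRing.Theory Num.Theory.

Set Implicit Arguments.
Unset Strict Implicit.
Unset Printing Implicit Defensive.

(* The first k positions flipped by a uniform permutation s form the set
   s @: [0, k), and every k-subset of positions is hit by the same number of
   permutations, since composing with a permutation mapping one k-subset onto
   another is a bijection between the fibres. So s flips exactly the positions
   where x and y differ with probability 1/C(n, k). For such an s, the k-th
   evaluated string is y, hence the process either evaluates y or has stopped
   earlier on a constructive mutation. If nothing at distance below k is
   constructive, the process never stops early and y is evaluated exactly when
   its first k flips are the positions where x and y differ. *)

Lemma perm_imset_of_card (T : finType) (A B : {set T}) :
  #|A| = #|B| -> exists p : {perm T}, p @: A = B.
Proof.
move=> AB.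
have trA := ntransitive_weak (max_card (mem A)) (Sym_trans T).
have dtuple_enum (C : {set T}) (t : #|A|.-tuple T) :
    val t = enum C -> t \in #|A|.-dtuple(setT).
  by move=> tC; rewrite inE tC enum_uniq; apply/subsetP.
have [p _ /(congr1 val)] := atransP2 trA (dtuple_enum A (enum_tuple A) erefl)
  (dtuple_enum B (tcast (esym AB) (enum_tuple B)) (val_tcast _ _)).
rewrite /= val_tcast => enumB; exists p; apply/setP => z.
rewrite -[z \in B]mem_enum [enum B]enumB.
by apply/imsetP/mapP => -[u uA ->]; exists u; rewrite ?mem_enum in uA *.
Qed.

Section PermImsetFibres.

Variables (T : finType) (L : {set T}).

Definition perm_imset_fibre (A : {set T}) : {set {perm T}} :=
  [set s : {perm T} | s @: L == A].

Lemma card_perm_imset_fibre_le (A B : {set T}) :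
  #|A| = #|B| -> #|perm_imset_fibre A| <= #|perm_imset_fibre B|.
Proof.
move=> AB; have [p pA] := perm_imset_of_card AB.
rewrite -(card_imset _ (mulIg p)); apply: subset_leq_card.
apply/subsetP => _ /imsetP[s + ->]; rewrite !inE => /eqP sL.
by rewrite -pA -sL -imset_comp; apply/eqP/eq_imset => z; rewrite permM.
Qed.

Lemma card_perm_binomial_fibre (A : {set T}) :
  #|A| = #|L| -> #|{perm T}| = 'C(#|T|, #|L|) * #|perm_imset_fibre A|.
Proof.
move=> AL; transitivity (\sum_(s : {perm T}) 1); first by rewrite sum1_card.
rewrite (partition_big (fun s : {perm T} => s @: L) (fun B => #|B| == #|L|));
  last by move=> s _; rewrite card_imset //; apply: perm_inj.
rewrite -card_draws -sum_nat_const; apply: eq_big => [B|B /eqP BL].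
  by rewrite inE.
transitivity #|perm_imset_fibre B|.
  by rewrite -sum1_card; apply: eq_bigl => s; rewrite inE.
apply/eqP; rewrite eqn_leq.
by rewrite !card_perm_imset_fibre_le ?BL ?AL.
Qed.

End PermImsetFibres.

Lemma le_Pr n (P Q : pred {perm 'I_n}) : subpred P Q -> (Pr P <= Pr Q)%R.
Proof.
move=> PQ; rewrite /Pr ler_pM2r ?invr_gt0 ?ltr0n; last first.
  by apply/card_gt0P; exists 1%g.
by rewrite ler_nat; apply/subset_leq_card/subsetP => s; rewrite !inE => /PQ.
Qed.

Lemma eq_Pr n (P Q : pred {perm 'I_n}) : P =1 Q -> Pr P = Pr Q.
Proof.
by move=> PQ; rewrite /Pr; congr (_%:R / _)%R; apply: eq_card => s; rewrite !inE PQ.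
Qed.

Section FlippedPositions.

Variable n : nat.

Definition prefix (i : nat) : {set 'I_n} := [set t : 'I_n | t < i].

Lemma card_prefix i : i <= n -> #|prefix i| = i.
Proof.
move=> hi.
have -> : prefix i = [set widen_ord hi t | t : 'I_i].
  apply/setP => t; rewrite inE; apply/idP/imsetP.
  - by move=> ht; exists (Ordinal ht) => //; apply: val_inj.
  - by move=> [u _ ->]; rewrite /= ltn_ord.
by rewrite card_imset ?card_ord // => u v /(congr1 val) /= /val_inj.
Qed.

Lemma Pr_prefix_imset (D : {set 'I_n}) k :
  #|D| = k -> Pr (fun s => s @: prefix k == D) = ('C(n, k)%:R^-1)%R.
Proof.
move=> Dk; have kn : k <= n by rewrite -Dk (leq_trans (max_card _)) ?card_ord.
have := @card_perm_binomial_fibre _ (prefix k) D.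
rewrite card_prefix // card_ord => /(_ Dk) card_perm_eq.
have perm_gt0 : 0 < #|{perm 'I_n}| by apply/card_gt0P; exists 1%g.
have fibre_neq0 : (#|perm_imset_fibre (prefix k) D|%:R != 0 :> rat)%R.
  by move: perm_gt0; rewrite card_perm_eq muln_gt0 pnatr_eq0 -lt0n => /andP[].
by rewrite /Pr card_perm_eq natrM invfM mulrA mulrAC mulfV // mul1r.
Qed.

Definition diff_set (x y : bitstring n) : {set 'I_n} := [set j | x j != y j].

Lemma hamming_le (x y : bitstring n) : hamming x y <= n.
Proof. by rewrite (leq_trans (max_card _)) ?card_ord. Qed.

Lemma evalstr_eqE (x y : bitstring n) (s : {perm 'I_n}) i :
  (evalstr x s i == y) = (s @: prefix i == diff_set x y).
Proof.
apply/eqP/eqP => [<- | flips].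
  by apply/setP => j; rewrite !inE ffunE; case: (x j); case: (j \in _).
by apply/ffunP => j; rewrite ffunE flips inE; case: (x j); case: (y j).
Qed.

Lemma hamming_evalstr (x : bitstring n) s i : i <= n -> hamming x (evalstr x s i) = i.
Proof.
move=> ni; rewrite /hamming -/(diff_set _ _).
have := evalstr_eqE x (evalstr x s i) s i; rewrite eqxx => /esym/eqP <-.
by rewrite card_imset ?card_prefix //; apply: perm_inj.
Qed.

End FlippedPositions.

Section Events.

Variables (d : Order.disp_t) (T : orderType d) (n : nat).
Variables (f : bitstring n -> T) (strict : bool) (M k : nat) (x y : bitstring n).
Hypotheses (k_gt0 : 0 < k) (kM : k <= M) (xy_k : hamming x y = k).

Lemma E_y_of_flips (s : {perm 'I_n}) :
    s @: prefix n k == diff_set x y ->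
    (forall j : 'I_n.+1, 0 < j < k -> ~~ constructive f strict x (evalstr x s j)) ->
  E_y f strict M x y s.
Proof.
move=> s_y early; apply/existsP; exists (inord k).
rewrite inordK ?ltnS -?xy_k ?hamming_le // xy_k k_gt0 kM evalstr_eqE s_y /=.
by apply/forallP => j; apply/implyP; apply: early.
Qed.

Lemma E_y_or_E_c_of_flips (s : {perm 'I_n}) :
  s @: prefix n k == diff_set x y -> E_y f strict M x y s || E_c f strict M k x s.
Proof.
move=> s_y; have [_|/existsPn no_E_c] := boolP (E_c f strict M k x s).
  by rewrite orbT.
rewrite E_y_of_flips // => j /andP[j_gt0 jk].
by have := no_E_c j; rewrite j_gt0 jk (leq_trans (ltnW jk) kM).
Qed.

Lemma flips_of_E_y (s : {perm 'I_n}) :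
  E_y f strict M x y s -> s @: prefix n k == diff_set x y.
Proof.
case/existsP => i /and4P[_ _ s_y _].
have ik : i = k :> nat by rewrite -xy_k -(eqP s_y) hamming_evalstr // -ltnS.
by rewrite -ik -evalstr_eqE.
Qed.

Lemma E_yE :
    (forall z, 0 < hamming x z -> hamming x z < k -> ~~ constructive f strict x z) ->
  E_y f strict M x y =1 (fun s => s @: prefix n k == diff_set x y).
Proof.
move=> no_early s; apply/idP/idP => [|s_y]; first exact: flips_of_E_y.
apply: E_y_of_flips => // j /andP[j_gt0 jk].
by apply: no_early; rewrite hamming_evalstr // -ltnS ltn_ord.
Qed.

End Events.

Theorem lemma1 (d : Order.disp_t) (T : orderType d) (n : nat)
  (f : bitstring n -> T) (strict : bool) (c : rat) (M : nat)
  (hc0 : (0 < c)%R) (hc1 : (c <= 1)%R) (hM : (M%:R = c * n%:R :> rat)%R)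
  (x y : bitstring n) (k : nat) (hk1 : (1 <= k)%N) (hkM : (k <= M)%N)
  (hxy : hamming x y = k) :
  ((('C(n, k))%:R)^-1 <=
     Pr (fun s => E_y f strict M x y s || E_c f strict M k x s))%R
  /\
  ((forall z : bitstring n, (1 <= hamming x z)%N -> (hamming x z < k)%N ->
      ~~ constructive f strict x z) ->
   Pr (fun s => E_y f strict M x y s) = (('C(n, k))%:R)^-1)%R.
Proof.
rewrite -(Pr_prefix_imset hxy); split.
  by apply: le_Pr => s; apply: E_y_or_E_c_of_flips.
by move=> no_early; apply: eq_Pr; apply: E_yE.
Qed.
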